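(* Let $P$ be a finite poset and $J$ a connected, nonprincipal order ideal of $P$. Then $J$ is nearly principal if and only if (a) $J$ has exactly two maximal elements $j_1,j_2$, and (b) for every common lower bound $\ell<_Pj_1,j_2$, the open intervals $]\ell,j_1[$ and $]\ell,j_2[$ coincide.
   Context: An order ideal of $P$ is a downward-closed subset; it is connected if it is nonempty and its induced Hasse diagram is connected, and principal if it equals $P_{\le p}=\{q:q\le_Pp\}$ for some $p$. Two connected order ideals intersect nontrivially if they are neither disjoint nor nested. A connected nonprincipal order ideal $J$ is nearly principal if there is exactly one unordered pair $\{J_1,J_2\}$ of connected order ideals intersecting nontrivially with $J_1\cup J_2=J$. The open interval $]\ell,j[=\{p:\ell<_Pp<_Pj\}$. *)

From mathcomp Require Import all_boot all_order.
Set Implicit Arguments. Unset Strict Implicit. Unset Printing Implicit Defensive.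
Import Order.Theory.
Local Open Scope order_scope.

Section Defs.
Context {d : Order.disp_t} {P : finPOrderType d}.

Definition covers (x y : P) : bool :=
  (x < y) && [forall z : P, ~~ ((x < z) && (z < y))].

(* edge relation of the Hasse diagram of P induced on J (undirected) *)
Definition hasse_in (J : {set P}) : rel P :=
  fun x y => [&& x \in J, y \in J & covers x y || covers y x].

Definition order_ideal (J : {set P}) : Prop :=
  forall x y : P, y \in J -> x <= y -> x \in J.

Definition connected_set (J : {set P}) : Prop :=
  J != set0 /\ forall x y, x \in J -> y \in J -> connect (hasse_in J) x y.

Definition connected_ideal (J : {set P}) : Prop :=
  order_ideal J /\ connected_set J.

Definition principal_ideal (J : {set P}) : Prop :=
  exists p : P, J = [set q | q <= p].

Definition intersect_nontrivially (J1 J2 : {set P}) : Prop :=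
  J1 :&: J2 != set0 /\ ~~ (J1 \subset J2) /\ ~~ (J2 \subset J1).

Definition good_pair (J J1 J2 : {set P}) : Prop :=
  connected_ideal J1 /\ connected_ideal J2 /\
  intersect_nontrivially J1 J2 /\ J1 :|: J2 = J.

(* exactly one unordered pair {J1,J2} *)
Definition nearly_principal (J : {set P}) : Prop :=
  connected_ideal J /\ ~ principal_ideal J /\
  exists J1 J2, good_pair J J1 J2 /\
    forall K1 K2, good_pair J K1 K2 ->
      (K1 = J1 /\ K2 = J2) \/ (K1 = J2 /\ K2 = J1).

Definition maximal_in (J : {set P}) (j : P) : Prop :=
  j \in J /\ forall x, x \in J -> j <= x -> x = j.

End Defs.

From mathcomp Require Import all_boot all_order.
Import Order.Theory.
Set Implicit Arguments. Unset Strict Implicit.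
Local Open Scope order_scope.

(** Let [M] be the set of maximal elements of [J], so [J] is the down-set of
[M]; two order ideals with connected union always meet.

If [J] is nearly principal, grow a subset of [M] one element at a time while
keeping its down-set connected.  The last element [t] added leaves [M - t] with
a connected down-set, so [P_{<=t}] and the down-set of [M - t] form an
admissible pair.  Doing this from two different starting points gives two
admissible pairs, and uniqueness forces [M = {j1, j2}].  If some [p] in
[]l, j2[] were not below [j1], then [P_{<=j1} ∪ P_{<=p}] and [P_{<=j2}] would
be another admissible pair, hence (b).

Conversely, under (a) and (b) an admissible pair [(K1, K2)] with [j1 ∈ K1]
has [K1 = P_{<=j1}]: a Hasse path in [K1] from a point outside [P_{<=j1}] to
[j1] enters [P_{<=j1}] along a cover [v <. u] with [v < j1] and [u < j2], and
(b) at [l = v] puts [u] below [j1]. *)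

Section NearlyPrincipal.
Context {d : Order.disp_t} {P : finPOrderType d}.
Implicit Types (J K A B S M : {set P}) (x y z p l : P).

Definition down p : {set P} := [set q | q <= p].

Definition downset S : {set P} := [set x | [exists m in S, x <= m]].

Definition maximals J : {set P} :=
  [set m in J | [forall x, (x \in J) && (m <= x) ==> (x == m)]].

Definition unique_good_pair J J1 J2 : Prop :=
  forall K1 K2, good_pair J K1 K2 -> (K1 = J1 /\ K2 = J2) \/ (K1 = J2 /\ K2 = J1).

Lemma in_down p q : (q \in down p) = (q <= p).
Proof. by rewrite inE. Qed.

Lemma down_inj : injective down.
Proof.
move=> p q /setP epq; apply/le_anti.
by rewrite -!in_down -epq andbC epq !in_down !lexx.
Qed.

Lemma down_ideal p : order_ideal (down p).
Proof. by move=> x y; rewrite !in_down => yp /le_trans; apply. Qed.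

Lemma down_sub_ideal K p : order_ideal K -> p \in K -> down p \subset K.
Proof. by move=> idK pK; apply/subsetP => x; rewrite in_down; apply: idK. Qed.

Lemma order_idealU A B : order_ideal A -> order_ideal B -> order_ideal (A :|: B).
Proof.
move=> idA idB x y; rewrite !inE => /orP[yA|yB] xy; first by rewrite (idA _ _ yA xy).
by rewrite (idB _ _ yB xy) orbT.
Qed.

Lemma hasse_in_sym K : symmetric (hasse_in K).
Proof. by move=> x y; rewrite /hasse_in andbCA orbC. Qed.

Lemma lt_exists_covers x p : x < p -> exists2 y, covers x y & y <= p.
Proof.
move=> xp; pose S := [set z | x < z <= p].
have pS : p \in S by rewrite inE xp lexx.
case: (arg_minnP (fun z => #|down z|) pS) => y yS ymin.
have /[!inE] /andP[xy yp] : y \in S by [].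
exists y => //; rewrite /covers xy; apply/forallP => w; apply/negP => /andP[xw wy].
have /ymin : w \in S by rewrite inE xw (le_trans (ltW wy) yp).
apply/negP; rewrite -ltnNge; apply: proper_card; apply/properP; split.
  by apply/subsetP => q; rewrite !in_down => qw; apply: le_trans qw (ltW wy).
by exists y; rewrite in_down ?lexx // lt_geF.
Qed.

Lemma connect_hasse_le K x y : order_ideal K -> y \in K -> x <= y ->
  connect (hasse_in K) x y.
Proof.
move=> idK yK; have [n] := ubnP #|[set z | x < z <= y]|; elim: n x => // n IH x.
rewrite ltnS => card_xy; rewrite le_eqVlt => /predU1P[->|xy]; first exact: connect0.
have [w cxw wy] := lt_exists_covers xy; have xw : x < w by case/andP: cxw.
apply: connect_trans (IH w _ wy).
  apply: connect1; rewrite /hasse_in cxw (idK _ _ yK wy) andbT.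
  exact: idK yK (ltW (lt_le_trans xw wy)).
apply: leq_trans card_xy; apply: proper_card; apply/properP; split.
  by apply/subsetP => q; rewrite !inE => /andP[/(lt_trans xw) -> ->].
by exists w; rewrite !inE ?xw ?wy ?ltxx.
Qed.

Lemma connect_hasse_sub K K' x y : K \subset K' ->
  connect (hasse_in K) x y -> connect (hasse_in K') x y.
Proof.
move=> sKK'; apply: connect_sub => u v /and3P[uK vK c]; apply: connect1.
by rewrite /hasse_in (subsetP sKK' _ uK) (subsetP sKK' _ vK).
Qed.

Lemma connect_exit (e : rel P) (a : pred P) x y : connect e x y -> a x -> ~~ a y ->
  exists u v, [/\ a u, ~~ a v & e u v].
Proof.
case/connectP => q; elim: q x => [|z q IH] x /=; first by move=> _ -> ax; rewrite ax.
case/andP => exz pzq yq ax; case az : (a z); first exact: IH pzq yq az.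
by move=> _; exists x, z; rewrite az.
Qed.

Lemma down_connected p : connected_ideal (down p).
Proof.
split; first exact: down_ideal.
have pp : p \in down p by rewrite in_down.
split; first by apply/set0Pn; exists p.
move=> x y; rewrite !in_down => xp yp.
apply: connect_trans (connect_hasse_le (@down_ideal p) pp xp) _.
by rewrite (sym_connect_sym (@hasse_in_sym _)) (connect_hasse_le (@down_ideal p) pp yp).
Qed.

Lemma connected_setU A B z : connected_set A -> connected_set B ->
  z \in A -> z \in B -> connected_set (A :|: B).
Proof.
move=> [_ cA] [_ cB] zA zB; split; first by apply/set0Pn; exists z; rewrite inE zA.
have to_z x : x \in A :|: B -> connect (hasse_in (A :|: B)) x z.
  case/setUP => [xA|xB].
    exact: connect_hasse_sub (subsetUl A B) (cA _ _ xA zA).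
  exact: connect_hasse_sub (subsetUr A B) (cB _ _ xB zB).
move=> x y xU yU; apply: connect_trans (to_z _ xU) _.
by rewrite (sym_connect_sym (@hasse_in_sym _)) to_z.
Qed.

(** A Hasse edge leaving an order ideal goes upwards, so it enters the other
ideal from a point already below an element of it. *)
Lemma ideals_meet A B a b : order_ideal A -> order_ideal B ->
  connected_set (A :|: B) -> a \in A -> b \in B -> exists2 z, z \in A & z \in B.
Proof.
move=> idA idB [_ cAB] aA bB; have [bA|bNA] := boolP (b \in A); first by exists b.
have aU : a \in A :|: B by rewrite inE aA.
have bU : b \in A :|: B by rewrite inE bB orbT.
have [u [v [/= uA vNA]]] := connect_exit (a := mem A) (cAB a b aU bU) aA bNA.
case/and3P => _ vU /orP[] /andP[uv _]; last by case/negP: vNA; exact: idA uA (ltW uv).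
by exists u => //; apply: idB (ltW uv); move: vU; rewrite inE (negbTE vNA).
Qed.

Lemma in_downset S x : (x \in downset S) = [exists m in S, x <= m].
Proof. by rewrite inE. Qed.

Lemma mem_downset S m : m \in S -> m \in downset S.
Proof. by move=> mS; rewrite in_downset; apply/exists_inP; exists m. Qed.

Lemma downset_ideal S : order_ideal (downset S).
Proof.
move=> x y; rewrite !in_downset => /exists_inP[m mS ym] xy.
by apply/exists_inP; exists m => //; apply: le_trans xy ym.
Qed.

Lemma downsetU S S' : downset (S :|: S') = downset S :|: downset S'.
Proof.
apply/setP => x; rewrite !inE; apply/exists_inP/orP.
  by case=> m /setUP[] mS xm; [left|right]; apply/exists_inP; exists m.
by case=> /exists_inP[m mS xm]; exists m; rewrite // inE mS ?orbT.
Qed.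

Lemma downset1 p : downset [set p] = down p.
Proof.
apply/setP => x; rewrite !inE; apply/exists_inP/idP => [[m /set1P-> //]|xp].
by exists p; rewrite ?inE.
Qed.

Lemma maximalsP J m : reflect (maximal_in J m) (m \in maximals J).
Proof.
rewrite inE; apply: (iffP andP) => [[mJ /forallP mmax]|[mJ mmax]].
  by split=> // x xJ mx; apply/eqP; have /implyP := mmax x; apply; rewrite xJ.
split=> //; apply/forallP => x; apply/implyP => /andP[xJ mx].
by rewrite (mmax _ xJ mx).
Qed.

Lemma exists_maximal_ge J x : x \in J -> exists2 m, m \in maximals J & x <= m.
Proof.
move=> xJ; pose S := [set z in J | x <= z].
have xS : x \in S by rewrite inE xJ lexx.
case: (arg_maxnP (fun z => #|down z|) xS) => m mS mmax.
have /[!inE] /andP[mJ xm] : m \in S by [].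
exists m => //; apply/maximalsP; split=> // y yJ my.
have /mmax : y \in S by rewrite inE yJ (le_trans xm my).
have sub_my : down m \subset down y.
  by apply/subsetP => q; rewrite !in_down => /le_trans; apply.
move=> card_ym; apply/le_anti; rewrite my andbT -in_down.
have /eqP -> : down m == down y by rewrite eqEcard sub_my; exact: card_ym.
by rewrite in_down.
Qed.

Lemma downset_maximals J : order_ideal J -> J = downset (maximals J).
Proof.
move=> idJ; apply/setP => x; rewrite in_downset; apply/idP/exists_inP.
  by case/exists_maximal_ge => m; exists m.
by case=> m /maximalsP[mJ _] xm; apply: idJ mJ xm.
Qed.

Lemma maximal_not_le J a b : maximal_in J a -> b \in J -> a != b -> ~~ (a <= b).
Proof.
by move=> [_ amax] bJ; apply: contra => ab; rewrite (amax _ bJ ab).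
Qed.

(** Adding to [S] an element of [M] below which lies a point of [downset S]
keeps the down-set connected; such an element exists by [ideals_meet]. *)
Lemma downset_connected_grow S M : S \proper M ->
  connected_set (downset M) -> connected_set (downset S) ->
  exists2 t, t \in M :\: S & connected_set (downset (t |: S)).
Proof.
move=> /properP[sSM [b bM bNS]] cM cS.
have [[/set0Pn[s sS] _] bR] : connected_set (downset S) /\ b \in M :\: S.
  by rewrite inE bNS bM.
have cU : connected_set (downset S :|: downset (M :\: S)).
  by rewrite -downsetU -{1}(setIidPr sSM) setID.
have [z zS] := ideals_meet (@downset_ideal S) (@downset_ideal _) cU sS (mem_downset bR).
rewrite in_downset => /exists_inP[t tR zt]; exists t => //.
rewrite downsetU downset1.
by apply: connected_setU (down_connected t).2 cS _ zS; rewrite in_down.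
Qed.

Lemma exists_nonseparating S M : S \proper M ->
  connected_set (downset M) -> connected_set (downset S) ->
  exists2 t, t \in M :\: S & connected_set (downset (M :\ t)).
Proof.
have [n] := ubnP #|M :\: S|; elim: n S => // n IH S.
rewrite ltnS => card_MS ltSM cM cS.
have [t /setDP[tM tNS] cSt] := downset_connected_grow ltSM cM cS.
have sStM : t |: S \subset M by rewrite subUset sub1set tM (proper_sub ltSM).
have [eM | neM] := eqVneq (t |: S) M.
  by exists t; [rewrite inE tNS | rewrite -eM setU1K].
have ltStM : t |: S \proper M by rewrite properEneq neM.
have [|t' /setDP[t'M t'NS] ct'] := IH _ _ ltStM cM cSt.
  apply: leq_trans card_MS; apply: proper_card; rewrite properEneq.
  rewrite setDS ?subsetUr // andbT; apply/eqP => /setP/(_ t).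
  by rewrite !inE tNS tM eqxx.
by exists t' => //; rewrite inE t'M (contra _ t'NS) // => t'S; rewrite inE t'S orbT.
Qed.

Lemma good_pair_sym J K1 K2 : good_pair J K1 K2 -> good_pair J K2 K1.
Proof.
case=> c1 [c2 [[n0 [s12 s21]] eU]]; split=> //; split=> //.
by split; [split; [rewrite setIC | split] | rewrite setUC].
Qed.

Lemma good_pair_union J K1 K2 : connected_ideal J ->
  connected_ideal K1 -> connected_ideal K2 -> K1 :|: K2 = J ->
  ~~ (K1 \subset K2) -> ~~ (K2 \subset K1) -> good_pair J K1 K2.
Proof.
move=> [_ cJ] c1 c2 eU nK12 nK21; split=> //; split=> //; split=> //.
have [[idK1 [/set0Pn[a aK1] _]] [idK2 [/set0Pn[b bK2] _]]] := (c1, c2).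
have cU : connected_set (K1 :|: K2) by rewrite eU.
have [z z1 z2] := ideals_meet idK1 idK2 cU aK1 bK2.
by split=> //; apply/set0Pn; exists z; rewrite inE z1 z2.
Qed.

Lemma good_pair_down_remove J t m : connected_ideal J ->
  t \in maximals J -> m \in maximals J -> m != t ->
  connected_set (downset (maximals J :\ t)) ->
  good_pair J (down t) (downset (maximals J :\ t)).
Proof.
move=> cJ /maximalsP tmax /maximalsP mmax mt cR.
have [[tJ _] [mJ _]] := (tmax, mmax).
apply: good_pair_union => //; first exact: down_connected.
- by split=> //; apply: downset_ideal.
- rewrite -downset1 -downsetU setD1K; last exact/maximalsP.
  exact/esym/downset_maximals/cJ.1.
- apply/subsetPn; exists t; first by rewrite in_down.
  apply/negP; rewrite in_downset => /exists_inP[m' /setD1P[m't /maximalsP[m'J _]]].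
  by apply/negP/(maximal_not_le tmax m'J); rewrite eq_sym.
- apply/subsetPn; exists m; first by apply: mem_downset; rewrite in_setD1 mt; apply/maximalsP.
  by rewrite in_down; apply: maximal_not_le mmax tJ mt.
Qed.

Lemma good_pair_down J a b : connected_ideal J -> J = down a :|: down b ->
  ~~ (a <= b) -> ~~ (b <= a) -> good_pair J (down a) (down b).
Proof.
move=> cJ eJ nab nba; apply: good_pair_union; rewrite -?eJ //; try exact: down_connected.
- by apply/subsetPn; exists a; rewrite !in_down.
- by apply/subsetPn; exists b; rewrite !in_down.
Qed.

Lemma two_maximals_down J j1 j2 : order_ideal J ->
  (forall j, maximal_in J j <-> j = j1 \/ j = j2) -> J = down j1 :|: down j2.
Proof.
move=> idJ hmax; rewrite {1}(downset_maximals idJ) -!downset1 -downsetU.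
congr downset; apply/setP => j; rewrite in_setU !in_set1.
apply/maximalsP/idP => [/hmax[]->|/orP[]/eqP->]; rewrite ?eqxx ?orbT //.
  by apply/hmax; left.
by apply/hmax; right.
Qed.

Lemma unique_good_pair_swap J J1 J2 A B C D : unique_good_pair J J1 J2 ->
  good_pair J A B -> good_pair J C D -> A != C -> D = A.
Proof. by move=> U /U[][-> _] /U[][-> ->]; rewrite ?eqxx. Qed.

Lemma exists_good_pair_down J t0 : connected_ideal J -> ~ principal_ideal J ->
  t0 \in maximals J -> exists2 t, t \in maximals J &
    t != t0 /\ good_pair J (down t) (downset (maximals J :\ t)).
Proof.
move=> cJ hnp t0M; have eJ := downset_maximals cJ.1.
have ltM : [set t0] \proper maximals J.
  rewrite properEneq sub1set t0M andbT; apply/eqP => eM.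
  by apply: hnp; exists t0; rewrite eJ -eM downset1.
have cM : connected_set (downset (maximals J)) by rewrite -eJ; exact: cJ.2.
have c0 : connected_set (downset [set t0]) by rewrite downset1; exact: (down_connected t0).2.
have [t /setDP[tM]] := exists_nonseparating ltM cM c0; rewrite in_set1 => tt0 ct.
by exists t => //; split=> //; apply: good_pair_down_remove cJ tM t0M _ ct; rewrite eq_sym.
Qed.

Lemma nearly_principal_two_maximals J J1 J2 : connected_ideal J ->
  ~ principal_ideal J -> unique_good_pair J J1 J2 ->
  exists j1 j2, j1 != j2 /\ forall j, maximal_in J j <-> j = j1 \/ j = j2.
Proof.
move=> cJ hnp U; have [_ [/set0Pn[x xJ] _]] := cJ.
have [t0 t0M _] := exists_maximal_ge xJ.
have [t1 t1M [_ g1]] := exists_good_pair_down cJ hnp t0M.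
have [t2 t2M [t21 g2]] := exists_good_pair_down cJ hnp t1M.
have e2 : downset (maximals J :\ t2) = down t1.
  by apply: unique_good_pair_swap U g1 g2 _; apply: contra t21 => /eqP/down_inj->.
exists t1, t2; split; first by rewrite eq_sym.
move=> j; split; last by case=> ->; apply/maximalsP.
move=> jmax; have [->|jt2] := eqVneq j t2; [by right | left].
have : j \in downset (maximals J :\ t2).
  by apply: mem_downset; rewrite in_setD1 jt2; apply/maximalsP.
rewrite e2 in_down => jt1; have [_ jm] := jmax.
by rewrite (jm t1) //; case/maximalsP: t1M.
Qed.

Lemma unique_good_pair_interval J J1 J2 a b l p : unique_good_pair J J1 J2 ->
  connected_ideal J -> J = down a :|: down b -> ~~ (a <= b) -> ~~ (b <= a) ->
  l < a -> l < b -> l < p -> p < b -> p < a.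
Proof.
move=> U cJ eJ nab nba la lb lp pb; apply/contraT => npa.
have npa' : ~~ (p <= a).
  apply: contra nab; rewrite le_eqVlt (negbTE npa) orbF => /eqP <-; exact: ltW.
pose K := down a :|: down p.
have gK : good_pair J K (down b).
  apply: good_pair_union => //; last 3 first.
  - have /setUidPr sub_pb : down p \subset down b.
      by apply: down_sub_ideal (@down_ideal b) _; rewrite in_down ltW.
    by rewrite eJ -setUA sub_pb.
  - by apply/subsetPn; exists a; rewrite !inE ?lexx.
  - by apply/subsetPn; exists b; rewrite !inE ?lexx // negb_or nba lt_geF.
  - split; first by apply: order_idealU; apply: down_ideal.
    apply: (connected_setU (z := l)) (down_connected a).2 (down_connected p).2 _ _.
      by rewrite in_down ltW.
    by rewrite in_down ltW.
  - exact: down_connected.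
have nKa : K != down a by apply/eqP => /setP/(_ p); rewrite !inE lexx orbT (negbTE npa').
have eK := unique_good_pair_swap U gK (good_pair_down cJ eJ nab nba) nKa.
by move: nab; rewrite -in_down eK !inE lexx.
Qed.

Lemma connected_ideal_eq_down K a b : connected_ideal K -> a \in K -> b \notin K ->
  K \subset down a :|: down b -> ~~ (a <= b) ->
  (forall l p, l < a -> l < b -> l < p -> p < b -> p < a) -> K = down a.
Proof.
move=> [idK [_ cK]] aK bNK sKab nab hab.
apply/eqP; rewrite eqEsubset down_sub_ideal // andbT; apply/subsetP => x xK.
rewrite in_down; apply/contraT => nxa.
have [|u [v [/= nua /negPn va]]] := connect_exit (a := fun z => ~~ (z <= a)) (cK _ _ xK aK) nxa.
  by rewrite /= lexx.
case/and3P => uK _ /orP[] /andP[uv _].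
  by case/negP: nua; apply: le_trans (ltW uv) va.
have ub : u < b.
  rewrite lt_neqAle; move: (subsetP sKab _ uK); rewrite inE !in_down (negbTE nua) /=.
  by move=> ->; rewrite andbT; apply: contraNneq bNK => <-.
have va' : v < a.
  by rewrite lt_neqAle va andbT; apply: contraNneq nab => <-; rewrite ltW ?(lt_trans uv ub).
by case/negP: nua; rewrite ltW // (hab v u) ?(lt_trans uv ub).
Qed.

Lemma good_pair_orient J a b K1 K2 : J = down a :|: down b ->
  ~~ (a <= b) -> ~~ (b <= a) ->
  (forall l p, l < a -> l < b -> l < p -> p < b -> p < a) ->
  (forall l p, l < b -> l < a -> l < p -> p < a -> p < b) ->
  good_pair J K1 K2 -> a \in K1 -> K1 = down a /\ K2 = down b.
Proof.
move=> eJ nab nba hab hba [c1 [c2 [[_ [nK12 nK21]] eU]]] aK1.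
have sJ : forall K, order_ideal K -> a \in K -> b \in K -> J \subset K.
  by move=> K idK aK bK; rewrite eJ subUset !down_sub_ideal.
have bNK1 : b \notin K1.
  apply: contra nK21 => bK1; apply: subset_trans (sJ _ c1.1 aK1 bK1).
  by rewrite -eU subsetUr.
have bJ : b \in J by rewrite eJ !inE lexx orbT.
have bK2 : b \in K2 by move: bJ; rewrite -eU inE (negbTE bNK1).
have aNK2 : a \notin K2.
  apply: contra nK12 => aK2; apply: subset_trans (sJ _ c2.1 aK2 bK2).
  by rewrite -eU subsetUl.
split.
  by apply: connected_ideal_eq_down c1 aK1 bNK1 _ nab hab; rewrite -eJ -eU subsetUl.
by apply: connected_ideal_eq_down c2 bK2 aNK2 _ nba hba; rewrite setUC -eJ -eU subsetUr.
Qed.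

Lemma unique_good_pair_down J a b : J = down a :|: down b ->
  ~~ (a <= b) -> ~~ (b <= a) ->
  (forall l p, l < a -> l < b -> l < p -> p < b -> p < a) ->
  (forall l p, l < b -> l < a -> l < p -> p < a -> p < b) ->
  unique_good_pair J (down a) (down b).
Proof.
move=> eJ nab nba hab hba K1 K2 gK; have [aK1|aNK1] := boolP (a \in K1).
  by left; apply: good_pair_orient eJ nab nba hab hba gK aK1.
have aK2 : a \in K2.
  have [_ [_ [_ eU]]] := gK; have : a \in J by rewrite eJ !inE lexx.
  by rewrite -eU inE (negbTE aNK1).
by have [-> ->] := good_pair_orient eJ nab nba hab hba (good_pair_sym gK) aK2; right.
Qed.

Lemma two_maximals_incomparable J j1 j2 : j1 != j2 ->
  (forall j, maximal_in J j <-> j = j1 \/ j = j2) -> ~~ (j1 <= j2) /\ ~~ (j2 <= j1).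
Proof.
move=> n12 hmax; have [m1 m2] : maximal_in J j1 /\ maximal_in J j2.
  by split; apply/hmax; [left | right].
split; first exact: maximal_not_le m1 m2.1 n12.
by apply: maximal_not_le m2 m1.1 _; rewrite eq_sym.
Qed.

End NearlyPrincipal.

Theorem proposition10p4 (d : Order.disp_t) (P : finPOrderType d) (J : {set P})
  (hJ : connected_ideal J) (hnp : ~ principal_ideal J) :
  nearly_principal J <->
  exists j1 j2 : P,
    [/\ j1 != j2,
        (forall j, maximal_in J j <-> (j = j1 \/ j = j2)) &
        (forall l : P, l < j1 -> l < j2 ->
           forall p : P, (l < p < j1) = (l < p < j2))].
Proof.
split.
- case=> _ [_ [J1 [J2 [_ U]]]].
  have [j1 [j2 [n12 hmax]]] := nearly_principal_two_maximals hJ hnp U.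
  have eJ := two_maximals_down hJ.1 hmax.
  have [n12' n21'] := two_maximals_incomparable n12 hmax.
  exists j1, j2; split=> // l l1 l2 p; apply/andP/andP => -[lp pj]; split=> //.
    by apply: (unique_good_pair_interval U hJ _ n21' n12' l2 l1 lp pj); rewrite setUC.
  exact: (unique_good_pair_interval U hJ eJ n12' n21' l1 l2 lp pj).
- case=> j1 [j2 [n12 hmax hint]].
  have eJ := two_maximals_down hJ.1 hmax.
  have [n12' n21'] := two_maximals_incomparable n12 hmax.
  have hab l p : l < j1 -> l < j2 -> l < p -> p < j2 -> p < j1.
    by move=> l1 l2 lp pj; move: (hint l l1 l2 p); rewrite lp pj /= => ->.
  have hba l p : l < j2 -> l < j1 -> l < p -> p < j1 -> p < j2.
    by move=> l2 l1 lp pj; move: (hint l l1 l2 p); rewrite lp pj /= => <-.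
  split=> //; split=> //; exists (down j1), (down j2).
  by split; [apply: good_pair_down | apply: unique_good_pair_down].
Qed.
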